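(* Fix $\eta\in[0,1)$. Let $\mathbf{Struct}^{\mathrm{fib}}_\eta$ be the full subcategory of $\mathbf{Struct}_\eta$ whose objects $\mathcal M=(X,\mathcal A,\mu,\mu^{\otimes2},R,I,\Pi_R,G,E_0,\eta)$ satisfy: $\{r\}\in\mathcal A$ and $\Pi_R^{-1}(\{r\})\in\mathcal A$ for every $r\in R$, and either (R-fin) $R$ is finite, or (R-ctbl) $R$ is countable, $\mathcal A$ is a $\sigma$-algebra and $\mu$ is $\sigma$-additive. Let $\mathbf{Struct}^{\mathrm{id}}_\eta$ be the full subcategory of $\mathbf{Struct}_\eta$ of objects with $R=X$, $I=\varnothing$, $\Pi_R=\mathrm{id}_X$. For an object $\mathcal M$ of $\mathbf{Struct}^{\mathrm{fib}}_\eta$ let $\mathcal M|_R=(R,\ \mathcal A\cap\mathcal P(R),\ \mu|_R,\ \mu^{\otimes2}|_{R\times R},\ R,\ \varnothing,\ \mathrm{id}_R,\ G\cap(R\times R),\ \mu(R),\ \eta)$. Then $\mathcal M|_R$ is an object of $\mathbf{Struct}^{\mathrm{id}}_\eta$ (in particular $\mu(R)>0$), every morphism $\phi:\mathcal M\to\mathcal M'$ in $\mathbf{Struct}^{\mathrm{fib}}_\eta$ satisfies $\phi(R)\subseteq R'$ and its restriction $\phi|_R:R\to R'$ is a morphism $\mathcal M|_R\to\mathcal M'|_{R'}$, and the assignment $\mathcal M\mapsto\mathcal M|_R$, $\phi\mapsto\phi|_R$ is a functor $\mathbf{Struct}^{\mathrm{fib}}_\eta\to\mathbf{Struct}^{\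mathrm{id}}_\eta$.
   Context: An admissible structural model is a tuple $(X,\mathcal A,\mu,\mu^{\otimes2},R,I,\Pi_R,G,E_0,\eta)$ with $X$ nonempty, $\mathcal A\subseteq\mathcal P(X)$ an algebra, $\mu:\mathcal A\to[0,\infty)$ finitely additive, $\mu^{\otimes2}$ finitely additive on the algebra $\mathcal A\otimes\mathcal A$ generated by rectangles with $\mu^{\otimes2}(B_1\times B_2)=\mu(B_1)\mu(B_2)$, $R,I\in\mathcal A$ disjoint, $\Pi_R:X\to R$ a map, $G\in\mathcal A\otimes\mathcal A$, $E_0>0$, $\eta\in[0,1]$, satisfying: Axiom I: $\Pi_R\circ\Pi_R=\Pi_R$, $\Pi_R|_R=\mathrm{id}_R$, $\Pi_R^{-1}(B)\in\mathcal A$ for $B\in\mathcal A$, $B\subseteq R$; Axiom II: $G$ reflexive, symmetric, $G\circ G=G$ (relational composition); Axiom III: $\mu(R)+\mu(I)=E_0$, $\mu(\Pi_R^{-1}(B))=\mu(B)$ for $B\in\mathcal A$, $B\subseteq R$, and for all $B\in\mathcal A$, $\mu^{\otimes2}((B\times X)\cap G)=\mu(B)+\eta\,\mu^{\otimes2}((\Pi_R^{-1}(B)\times X)\cap G)$. A morphism $\phi:\mathcal M\to\mathcal M'$ between admissible structural models $\mathcal M=(X,\mathcal A,\mu,\mu^{\otimes2},R,I,\Pi_R,G,E_0,\eta)$ and $\mathcal M'=(X',\mathcal A',\mu',\mu'^{\otimes2},R',I',\Pi_{R'},G',E_0',\eta)$ is a map $\phi:X\to X'$ such that: (M1) $\phi^{-1}(B')\in\mathcal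 A$ for all $B'\in\mathcal A'$ and $(\phi\times\phi)^{-1}(S')\in\mathcal A\otimes\mathcal A$ for all $S'\in\mathcal A'\otimes\mathcal A'$; (M2) $\phi\circ\Pi_R=\Pi_{R'}\circ\phi$; (M3) $(x,y)\in G$ implies $(\phi(x),\phi(y))\in G'$; (M4) $\mu(\phi^{-1}(B'))=\mu'(B')$ for all $B'\in\mathcal A'$ and $\mu^{\otimes2}((\phi\times\phi)^{-1}(S'))=\mu'^{\otimes2}(S')$ for all $S'\in\mathcal A'\otimes\mathcal A'$. $\mathbf{Struct}_\eta$ is the category of admissible structural models with parameter $\eta$ and these morphisms. *)

From HB Require Import structures.
From mathcomp Require Import all_boot all_order all_algebra.
From mathcomp Require Import all_classical all_reals all_analysis.
Set Implicit Arguments. Unset Strict Implicit. Unset Printing Implicit Defensive.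
Import Order.TTheory GRing.Theory Num.Theory.
Import numFieldNormedType.Exports.
Local Open Scope classical_set_scope.
Local Open Scope ring_scope.

Section Defs.
Variable R : realType.

Definition is_algebra {X : Type} (A : set (set X)) : Prop :=
  [/\ A setT,
      (forall B, A B -> A (~` B)) &
      (forall B C, A B -> A C -> A (B `|` C))].

Definition is_sigma_algebra {X : Type} (A : set (set X)) : Prop :=
  is_algebra A /\ (forall F : nat -> set X, (forall n, A (F n)) -> A (\bigcup_n F n)).

(* A (x) A : the algebra on X * X generated by the rectangles B1 x B2, B1 B2 in A *)
Definition rect_algebra {X : Type} (A : set (set X)) : set (set (X * X)) :=
  fun S => forall F : set (set (X * X)), is_algebra F ->
    (forall B1 B2, A B1 -> A B2 -> F (B1 `*` B2)) -> F S.

Definition fin_additive {T : Type} (A : set (set T)) (m : set T -> R) : Prop :=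
  (forall B, A B -> 0 <= m B) /\
  (forall B C, A B -> A C -> B `&` C = set0 -> m (B `|` C) = m B + m C).

Definition sigma_additive {T : Type} (A : set (set T)) (m : set T -> R) : Prop :=
  forall F : nat -> set T, (forall n, A (F n)) ->
    (forall i j, i <> j -> F i `&` F j = set0) ->
    A (\bigcup_n F n) ->
    ((fun n : nat => \sum_(i < n) m (F i)) : nat -> R) @ \oo --> (m (\bigcup_n F n) : R).

Definition rel_comp {X : Type} (G H : set (X * X)) : set (X * X) :=
  [set p | exists y, G (p.1, y) /\ H (y, p.2)].

(* raw data (X, A, mu, mu2, R, I, Pi_R, G, E0, eta); Pi_R : X -> R is encoded as
   Pi : X -> X together with the requirement that Pi x lies in R. *)
Unset Implicit Arguments.
Record pre_model := PreModel {
  carrier : Type;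
  alg : set (set carrier);
  mu : set carrier -> R;
  mu2 : set (carrier * carrier) -> R;
  RR : set carrier;
  II : set carrier;
  Pi : carrier -> carrier;
  G : set (carrier * carrier);
  E0 : R;
  eta : R }.
Set Implicit Arguments.

Definition pairmap {X Y : Type} (f : X -> Y) : X * X -> Y * Y :=
  fun p => (f p.1, f p.2).

Record admissible (M : pre_model) : Prop := {
  adm_nonempty : inhabited (carrier M);
  adm_alg : is_algebra (alg M);
  adm_mu : fin_additive (alg M) (mu M);
  adm_mu2 : fin_additive (rect_algebra (alg M)) (mu2 M);
  adm_mu2_rect : forall B1 B2, alg M B1 -> alg M B2 ->
      mu2 M (B1 `*` B2) = mu M B1 * mu M B2;
  adm_R : alg M (RR M);
  adm_I : alg M (II M);
  adm_RI : RR M `&` II M = set0;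
  adm_Pi_range : forall x, RR M (Pi M x);
  adm_G : rect_algebra (alg M) (G M);
  adm_E0 : 0 < E0 M;
  adm_eta : 0 <= eta M <= 1;
  ax1_idem : forall x, Pi M (Pi M x) = Pi M x;
  ax1_id : forall x, RR M x -> Pi M x = x;
  ax1_meas : forall B, alg M B -> B `<=` RR M -> alg M (Pi M @^-1` B);
  ax2_refl : forall x, G M (x, x);
  ax2_sym : forall x y, G M (x, y) -> G M (y, x);
  ax2_trans : rel_comp (G M) (G M) = G M;
  ax3_E0 : mu M (RR M) + mu M (II M) = E0 M;
  ax3_pres : forall B, alg M B -> B `<=` RR M -> mu M (Pi M @^-1` B) = mu M B;
  ax3_bal : forall B, alg M B ->
      mu2 M ((B `*` setT) `&` G M)
      = mu M B + eta M * mu2 M ((Pi M @^-1` B `*` setT) `&` G M) }.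

Definition is_morphism (M M' : pre_model) (phi : carrier M -> carrier M') : Prop :=
  [/\ (forall B', alg M' B' -> alg M (phi @^-1` B')) /\
      (forall S', rect_algebra (alg M') S' ->
                  rect_algebra (alg M) (pairmap phi @^-1` S')),
      (forall x, phi (Pi M x) = Pi M' (phi x)),
      (forall x y, G M (x, y) -> G M' (phi x, phi y)) &
      (forall B', alg M' B' -> mu M (phi @^-1` B') = mu M' B') /\
      (forall S', rect_algebra (alg M') S' ->
                  mu2 M (pairmap phi @^-1` S') = mu2 M' S')].

Definition struct_obj (e : R) (M : pre_model) : Prop :=
  admissible M /\ eta M = e.

Definition fib_obj (e : R) (M : pre_model) : Prop :=
  [/\ struct_obj e M,
      (forall r, RR M r -> alg M [set r] /\ alg M (Pi M @^-1` [set r])) &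
      (finite_set (RR M) \/
       [/\ countable (RR M), is_sigma_algebra (alg M) & sigma_additive (alg M) (mu M)])].

Definition id_obj (e : R) (M : pre_model) : Prop :=
  [/\ struct_obj e M, RR M = setT, II M = set0 & (forall x, Pi M x = x)].

Definition restrictR (M : pre_model) : pre_model :=
  @PreModel {x : carrier M | RR M x}
    (fun B => alg M (sval @` B))
    (fun B => mu M (sval @` B))
    (fun S => mu2 M (pairmap sval @` S))
    setT set0 id
    (pairmap sval @^-1` G M)
    (mu M (RR M))
    (eta M).

Definition restrict_map (M M' : pre_model) (phi : carrier M -> carrier M')
  (h : forall x, RR M x -> RR M' (phi x)) :
  carrier (restrictR M) -> carrier (restrictR M') :=
  fun x => exist (RR M') (phi (sval x)) (h (sval x) (svalP x)).

End Defs.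

Arguments carrier {R}. Arguments alg {R}. Arguments mu {R}. Arguments mu2 {R}.
Arguments RR {R}. Arguments II {R}. Arguments Pi {R}. Arguments G {R}.
Arguments E0 {R}. Arguments eta {R}.
Arguments is_morphism {R} M M' phi.
Arguments restrict_map {R M M'} phi h _.

From Pilot Require Import Defs.
From HB Require Import structures.
From mathcomp Require Import all_boot all_order all_algebra.
From mathcomp Require Import all_classical all_reals all_analysis.
From mathcomp Require Import lra.
Import Order.TTheory GRing.Theory Num.Theory.
Local Open Scope classical_set_scope.
Local Open Scope ring_scope.

(* Axiom III for B = R gives mu (Pi^-1 R) = mu R, and Pi^-1 R is the whole space,
   so the complement of R is mu-null; hence mu I = 0, mu R = E0 > 0, and the
   complement of R x R is mu2-null.  Every measure involved is therefore unchanged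
   by intersecting with R, resp. R x R, where Pi is the identity: the balance
   equation of M becomes that of M|_R, and measure preservation of a morphism
   restricts in the same way. *)

Section Algebra.
Context {T : Type} {A : set (set T)} (hA : is_algebra A).

Lemma algebraT : A setT. Proof. by case: hA. Qed.

Lemma algebraC {B} : A B -> A (~` B). Proof. by case: hA => _ + _; apply. Qed.

Lemma algebraU {B C} : A B -> A C -> A (B `|` C). Proof. by case: hA => _ _; apply. Qed.

Lemma algebra0 : A set0. Proof. by rewrite -setCT; exact/algebraC/algebraT. Qed.

Lemma algebraI {B C} : A B -> A C -> A (B `&` C).
Proof.
by move=> hB hC; rewrite -[B `&` C]setCK setCI; apply/algebraC/algebraU; exact: algebraC.
Qed.

Lemma algebraD {B C} : A B -> A C -> A (B `\` C).
Proof. by move=> hB hC; rewrite setDE; apply: algebraI => //; exact: algebraC. Qed.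

End Algebra.

Lemma rect_algebra_algebra {T : Type} (A : set (set T)) : is_algebra (rect_algebra A).
Proof.
split=> [F hF _|B hB F hF hX|B C hB hC F hF hX]; first exact: algebraT.
- by apply: algebraC => //; exact: hB.
- by apply: algebraU => //; [exact: hB | exact: hC].
Qed.

Lemma rect_algebraX {T : Type} {A : set (set T)} {B1 B2} :
  A B1 -> A B2 -> rect_algebra A (B1 `*` B2).
Proof. by move=> h1 h2 F _; apply. Qed.

Lemma rect_algebra_preimage {T U : Type} (A : set (set T)) (A' : set (set U)) (f : T -> U) :
  (forall B, A' B -> A (f @^-1` B)) ->
  forall S, rect_algebra A' S -> rect_algebra A (Defs.pairmap f @^-1` S).
Proof.
move=> hf S hS; apply: (hS (fun S => rect_algebra A (Defs.pairmap f @^-1` S))).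
split=> /= [|B|B C].
- exact: algebraT (rect_algebra_algebra A).
- by rewrite -preimage_setC; exact: algebraC (rect_algebra_algebra A) _.
- by rewrite preimage_setU; exact: algebraU (rect_algebra_algebra A) _ _.
- by move=> B1 B2 h1 h2; exact: rect_algebraX (hf _ h1) (hf _ h2).
Qed.

Section FinAdditive.
Context {R : realType} {T : Type} {A : set (set T)} (hA : is_algebra A)
  {m : set T -> R} (hm : fin_additive A m).

Lemma fin_additive_ge0 {B} : A B -> 0 <= m B. Proof. by case: hm => + _; apply. Qed.

Lemma fin_additive0 : m set0 = 0.
Proof.
case: hm => _ /(_ set0 set0 (algebra0 hA) (algebra0 hA) (setI0 _)).
by rewrite setU0; lra.
Qed.

Lemma fin_additive_setID {B C} : A B -> A C -> m B = m (B `&` C) + m (B `\` C).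
Proof.
move=> hB hC; case: hm => _ hadd.
rewrite -hadd ?setUIDK //; [exact: algebraI|exact: algebraD|].
by rewrite setDE setIACA setICr !setI0.
Qed.

Lemma le_fin_additive {B C} : A B -> A C -> B `<=` C -> m B <= m C.
Proof.
move=> hB hC BC; rewrite (fin_additive_setID hC hB) (setIidr BC) lerDl.
by apply: fin_additive_ge0; exact: algebraD.
Qed.

Lemma fin_additive_setU_null {B C} : A B -> A C -> m B = 0 -> m C = 0 -> m (B `|` C) = 0.
Proof.
move=> hB hC mB0 mC0; have hBC := algebraU hA hB hC.
apply/eqP; rewrite eq_le fin_additive_ge0 // andbT.
rewrite (fin_additive_setID hBC hB) setUK mB0 add0r -mC0.
by apply: le_fin_additive; [exact: algebraD | | move=> x [[]]].
Qed.

Lemma fin_additive_setI_conull {B C} : A B -> A C -> m (~` C) = 0 -> m (B `&` C) = m B.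
Proof.
move=> hB hC mC0; rewrite [RHS](fin_additive_setID hB hC).
suff -> : m (B `\` C) = 0 by rewrite addr0.
apply/eqP; rewrite eq_le fin_additive_ge0 ?andbT; last exact: algebraD.
by rewrite -mC0; apply: le_fin_additive; [exact: algebraD|exact: algebraC|move=> x []].
Qed.

Lemma eq_fin_additive_conull {B B' C} : A B -> A B' -> A C -> m (~` C) = 0 ->
  B `&` C = B' `&` C -> m B = m B'.
Proof.
move=> hB hB' hC mC0 eBB'.
by rewrite -(fin_additive_setI_conull hB hC mC0) eBB' fin_additive_setI_conull.
Qed.

End FinAdditive.

Section Image.
Context {T U : Type} (f : T -> U).

Lemma image_preimage_range Y : f @` (f @^-1` Y) = range f `&` Y.
Proof.
apply/seteqP; split=> [_ [x Yfx <-]|_ [[x _ <-] Yfx]]; first by split; [exists x|].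
by exists x.
Qed.

Lemma image_pairmap_setX B1 B2 :
  Defs.pairmap f @` (B1 `*` B2) = f @` B1 `*` f @` B2.
Proof.
apply/seteqP; split=> [_ [[x y] [Bx By] <-]|[u v] /= [[x Bx <-] [y By <-]]].
  by split; [exists x|exists y].
by exists (x, y).
Qed.

Lemma range_pairmap : range (Defs.pairmap f) = range f `*` range f.
Proof. by rewrite -image_pairmap_setX setXTT. Qed.

End Image.

Section InjectiveImage.
Context {T U : Type} {f : T -> U} (f_inj : injective f).

Lemma pairmap_inj : injective (Defs.pairmap f).
Proof. by move=> [x1 x2] [y1 y2] [/f_inj-> /f_inj->]. Qed.

Lemma image_inj_setI B C : f @` (B `&` C) = f @` B `&` f @` C.
Proof.
apply/seteqP; split; first exact: sub_image_setI.
by move=> _ [[x Bx <-] [y Cy /f_inj eyx]]; subst y; exists x.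
Qed.

Lemma image_inj_setC B : f @` (~` B) = range f `\` f @` B.
Proof.
apply/seteqP; split=> [_ [x nBx <-]|_ [[x _ <-] nBfx]].
  by split; [exists x|rewrite image_inj].
by exists x => // Bx; apply: nBfx; exists x.
Qed.

End InjectiveImage.

Lemma image_preimage_commute {T T' U U' : Type}
    (f : T -> U) (g : T' -> U') (r : T -> T') (phi : U -> U') :
  injective g -> (forall t, g (r t) = phi (f t)) ->
  forall B, f @` (r @^-1` B) = range f `&` phi @^-1` (g @` B).
Proof.
move=> g_inj gr B; apply/seteqP; split=> [_ [t Brt <-]|_ [[t _ <-] [b Bb gb]]].
  by split; [exists t|exists (r t); rewrite ?gr].
by exists t => //=; rewrite -(g_inj _ _ (etrans gb (esym (gr t)))).
Qed.

Lemma sval_inj {T : Type} {P : set T} : injective (@sval T P).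
Proof. by apply: eq_sig_hprop => x p q; exact: Prop_irrelevance. Qed.

Lemma range_sval {T : Type} (P : set T) : range (@sval T P) = P.
Proof.
by apply/seteqP; split=> [_ [[x Px] _ <-] //|x Px]; exists (exist _ x Px).
Qed.

Section Trace.
Context {T U : Type} {f : T -> U} (f_inj : injective f).
Context {A : set (set U)} (hA : is_algebra A) (A_range : A (range f)).

Lemma trace_algebra : is_algebra (fun B => A (f @` B)).
Proof.
split=> /= [|B hB|B C hB hC]; first by [].
- by rewrite image_inj_setC //; exact: algebraD.
- by rewrite image_setU; exact: algebraU.
Qed.

Lemma trace_rect_algebra S :
  rect_algebra (fun B => A (f @` B)) S -> rect_algebra A (Defs.pairmap f @` S).
Proof.
have hA2 := rect_algebra_algebra A.
have A2_range : rect_algebra A (range (Defs.pairmap f)).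
  by rewrite range_pairmap; exact (rect_algebraX A_range A_range).
move=> hS; apply: (hS (fun S => rect_algebra A (Defs.pairmap f @` S))).
  split=> /= [|B hB|B C hB hC] //.
  - by rewrite image_inj_setC; [exact (algebraD hA2 A2_range hB) | exact: pairmap_inj].
  - by rewrite image_setU; exact (algebraU hA2 hB hC).
by move=> B1 B2 h1 h2; rewrite image_pairmap_setX; exact (rect_algebraX h1 h2).
Qed.

Lemma trace_rect_algebra_preimage S :
  rect_algebra A S -> rect_algebra (fun B => A (f @` B)) (Defs.pairmap f @^-1` S).
Proof.
by apply: rect_algebra_preimage => B hB /=; rewrite image_preimage_range; exact: algebraI.
Qed.

End Trace.

Lemma image_fin_additive {R : realType} {T U : Type} {f : T -> U} (f_inj : injective f)
    {A' : set (set T)} {A : set (set U)} {m : set U -> R} :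
  (forall B, A' B -> A (f @` B)) -> fin_additive A m ->
  fin_additive A' (fun B => m (f @` B)).
Proof.
move=> hf [m_ge0 m_add]; split=> [B hB|B C hB hC BC0]; first exact/m_ge0/hf.
rewrite image_setU m_add //; [exact: hf | exact: hf |].
by rewrite -image_inj_setI // BC0 image_set0.
Qed.

Lemma rel_comp_preimage {T U : Type} (f : T -> U) (G : set (U * U)) :
  (forall u, G (u, u)) -> rel_comp G G = G ->
  rel_comp (Defs.pairmap f @^-1` G) (Defs.pairmap f @^-1` G) = Defs.pairmap f @^-1` G.
Proof.
move=> Grefl Gtrans; apply/seteqP; split=> [[x z] [y [Gxy Gyz]]|[x z] Gxz].
  by rewrite /= -Gtrans; exists (f y).
by exists x; split => //=; exact: Grefl.
Qed.

Section Admissible.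
Context {R : realType} {M : pre_model R} (hM : admissible M).
Local Notation A := (alg M).
Local Notation RM := (RR M).
Let hA := adm_alg hM.
Let hA2 := rect_algebra_algebra A.
Let hmu := adm_mu hM.
Let hmu2 := adm_mu2 hM.
Let A_R := adm_R hM.

Lemma mu_setC_R : mu M (~` RM) = 0.
Proof.
have preimage_Pi_R : Pi M @^-1` RM = setT.
  by apply/seteqP; split=> // x _; exact: adm_Pi_range.
have := ax3_pres hM A_R (@subset_refl _ RM).
by rewrite preimage_Pi_R (fin_additive_setID hA hmu (algebraT hA) A_R) setTI setTD; lra.
Qed.

Lemma mu_I : mu M (II M) = 0.
Proof.
apply/eqP; rewrite eq_le (fin_additive_ge0 hmu (adm_I hM)) andbT -mu_setC_R.
apply: le_fin_additive (adm_I hM) (algebraC hA A_R) _ => // x Ix Rx.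
by have : (RM `&` II M) x by []; rewrite (adm_RI hM).
Qed.

Lemma mu_R : mu M RM = E0 M.
Proof. by have := ax3_E0 hM; rewrite mu_I addr0. Qed.

Lemma mu_R_gt0 : 0 < mu M RM.
Proof. by rewrite mu_R; exact: adm_E0. Qed.

Lemma mu2_setC_RR : mu2 M (~` (RM `*` RM)) = 0.
Proof.
have A_RC := algebraC hA A_R; have A_T := algebraT hA.
have -> : ~` (RM `*` RM) = (~` RM `*` setT) `|` (setT `*` ~` RM).
  apply/seteqP; split=> [[x y] /= nRR|[x y] [[nRx _]|[_ nRy]] [Rx Ry]] //.
  by have [Rx|] := pselect (RM x); [right; split=> // Ry; exact: nRR|left].
apply: (fin_additive_setU_null hA2 hmu2 (rect_algebraX A_RC A_T) (rect_algebraX A_T A_RC)).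
- by rewrite (adm_mu2_rect hM) // mu_setC_R mul0r.
- by rewrite (adm_mu2_rect hM) // mu_setC_R mulr0.
Qed.

Lemma eq_mu2_on_RR {S S'} : rect_algebra A S -> rect_algebra A S' ->
  S `&` (RM `*` RM) = S' `&` (RM `*` RM) -> mu2 M S = mu2 M S'.
Proof.
move=> hS hS'.
exact: (eq_fin_additive_conull hA2 hmu2 hS hS' (rect_algebraX A_R A_R) mu2_setC_RR).
Qed.

Lemma balance_on_R B : A B -> B `<=` RM ->
  mu2 M ((B `*` RM) `&` G M) = mu M B + Defs.eta M * mu2 M ((B `*` RM) `&` G M).
Proof.
move=> hB BR; have hG := adm_G hM; have A_T := algebraT hA.
have hBR := algebraI hA2 (rect_algebraX hB A_R) hG.
have hBT := algebraI hA2 (rect_algebraX hB A_T) hG.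
have hPiBT := algebraI hA2 (rect_algebraX (ax1_meas hM hB BR) A_T) hG.
have := ax3_bal hM hB.
rewrite (eq_mu2_on_RR hBT hBR); last first.
  by apply/seteqP; split=> -[x y] [[[Bx _] Gxy] [Rx Ry]].
rewrite (eq_mu2_on_RR hPiBT hBR) //.
apply/seteqP; split=> -[x y] [[[/= Bx _] Gxy] [Rx Ry]].
- by rewrite (ax1_id hM Rx) in Bx.
- by rewrite /= (ax1_id hM Rx).
Qed.

End Admissible.

Section Restriction.
Context {R : realType} {M : pre_model R} (hM : admissible M).
Local Notation sv := (@sval (carrier M) (RR M)).
Local Notation psv := (Defs.pairmap sv).

Lemma image_restrictR_section B :
  psv @` ((B `*` setT) `&` (psv @^-1` G M)) = (sv @` B `*` RR M) `&` G M.
Proof.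
apply/seteqP; split=> [_ [[x y] [[Bx _] Gxy] <-]|[a b] /= [[[x Bx <-] Rb] Gab]].
  by split=> //; split; [exists x | exact: svalP].
by exists (x, exist _ b Rb).
Qed.

Lemma restrictR_admissible : admissible (restrictR M).
Proof.
have hA := adm_alg hM; have A_R := adm_R hM.
have A_range : alg M (range sv) by rewrite range_sval.
constructor => /=.
- by case: (adm_nonempty hM) => x; constructor; exists (Pi M x); exact: adm_Pi_range.
- exact (trace_algebra sval_inj hA A_range).
- exact (image_fin_additive sval_inj (fun B hB => hB) (adm_mu hM)).
- exact (image_fin_additive (pairmap_inj sval_inj)
    (trace_rect_algebra sval_inj A_range) (adm_mu2 hM)).
- by move=> B1 B2 h1 h2; rewrite image_pairmap_setX (adm_mu2_rect hM).
- by [].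
- by rewrite image_set0; exact: algebra0.
- exact: setI0.
- by [].
- exact (trace_rect_algebra_preimage hA A_range _ (adm_G hM)).
- exact: mu_R_gt0.
- exact: adm_eta hM.
- by [].
- by [].
- by [].
- move=> x; exact: ax2_refl hM (sval x).
- move=> x y; exact: ax2_sym hM (sval x) (sval y).
- exact: rel_comp_preimage (ax2_refl hM) (ax2_trans hM).
- by rewrite range_sval image_set0 (fin_additive0 hA (adm_mu hM)) addr0.
- by [].
- move=> B hB; rewrite preimage_id image_restrictR_section.
  by apply: balance_on_R => // _ [[x Rx] _ <-].
Qed.

End Restriction.

Section Morphism.
Context {R : realType} {M M' : pre_model R} (hM : admissible M) (hM' : admissible M').
Context {phi : carrier M -> carrier M'} (hphi : is_morphism M M' phi).
Local Notation sv := (@sval (carrier M) (RR M)).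
Local Notation sv' := (@sval (carrier M') (RR M')).

Lemma morphism_R x : RR M x -> RR M' (phi x).
Proof.
by case: hphi => _ phiPi _ _ Rx; rewrite -(ax1_id hM Rx) phiPi; exact: adm_Pi_range.
Qed.

Variable h : forall x, RR M x -> RR M' (phi x).
Local Notation rphi := (restrict_map phi h).

Lemma image_preimage_restrict_map B :
  sv @` (rphi @^-1` B) = RR M `&` phi @^-1` (sv' @` B).
Proof.
by rewrite (image_preimage_commute sv sv' rphi phi sval_inj (fun _ => erefl)) range_sval.
Qed.

Lemma image_preimage_pairmap_restrict_map S :
  Defs.pairmap sv @` (Defs.pairmap rphi @^-1` S)
  = (RR M `*` RR M) `&` Defs.pairmap phi @^-1` (Defs.pairmap sv' @` S).
Proof.
rewrite (image_preimage_commute _ _ _ (Defs.pairmap phi) (pairmap_inj sval_inj)) //.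
by rewrite range_pairmap range_sval.
Qed.

Lemma restrict_map_morphism : is_morphism (restrictR M) (restrictR M') rphi.
Proof.
have hA := adm_alg hM; have A_R := adm_R hM.
have A'_range : alg M' (range sv') by rewrite range_sval; exact: adm_R.
case: hphi => -[phi_meas phi_meas2] _ phiG [phi_mu phi_mu2].
have rphi_meas B : alg M' (sv' @` B) -> alg M (sv @` (rphi @^-1` B)).
  by move=> hB; rewrite image_preimage_restrict_map; exact: algebraI A_R (phi_meas _ hB).
split=> //.
- by split; [exact: rphi_meas | exact: rect_algebra_preimage].
- by move=> x y; exact: phiG.
split=> [B hB|S hS] /=.
- rewrite image_preimage_restrict_map setIC -phi_mu //.
  exact (fin_additive_setI_conull hA (adm_mu hM) (phi_meas _ hB) A_R (mu_setC_R hM)).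
- have hS' := trace_rect_algebra sval_inj A'_range S hS.
  rewrite image_preimage_pairmap_restrict_map setIC -phi_mu2 //.
  exact (fin_additive_setI_conull (rect_algebra_algebra _) (adm_mu2 hM) (phi_meas2 _ hS')
    (rect_algebraX A_R A_R) (mu2_setC_RR hM)).
Qed.

End Morphism.

Lemma restrict_map_id {R : realType} (M : pre_model R) (h : forall x, RR M x -> RR M (id x)) :
  restrict_map id h = id.
Proof. by apply: funext => x; exact: sval_inj. Qed.

Lemma restrict_map_comp {R : realType} (M1 M2 M3 : pre_model R)
    (phi : carrier M1 -> carrier M2) (psi : carrier M2 -> carrier M3)
    (h1 : forall x, RR M1 x -> RR M2 (phi x)) (h2 : forall x, RR M2 x -> RR M3 (psi x))
    (h12 : forall x, RR M1 x -> RR M3 ((psi \o phi) x)) :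
  restrict_map (psi \o phi) h12 = restrict_map psi h2 \o restrict_map phi h1.
Proof. by apply: funext => x; exact: sval_inj. Qed.

Theorem proposition8p11 (R : realType) (e : R) :
  0 <= e < 1 ->
  (* M|_R is an object of Struct^id_eta, in particular mu(R) > 0 *)
  (forall M : pre_model R, fib_obj e M ->
     id_obj e (restrictR M) /\ 0 < mu M (RR M)) /\
  (* phi(R) included in R' and phi|_R is a morphism M|_R -> M'|_R' *)
  (forall (M M' : pre_model R) (phi : carrier M -> carrier M'),
     fib_obj e M -> fib_obj e M' -> is_morphism M M' phi ->
     exists h : (forall x, RR M x -> RR M' (phi x)),
       is_morphism (restrictR M) (restrictR M') (restrict_map phi h)) /\
  (* functoriality: identities *)
  (forall (M : pre_model R) (h : forall x, RR M x -> RR M (@id (carrier M) x)),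
     fib_obj e M -> restrict_map id h = id) /\
  (* functoriality: composition *)
  (forall (M1 M2 M3 : pre_model R)
          (phi : carrier M1 -> carrier M2) (psi : carrier M2 -> carrier M3)
          (h1 : forall x, RR M1 x -> RR M2 (phi x))
          (h2 : forall x, RR M2 x -> RR M3 (psi x))
          (h12 : forall x, RR M1 x -> RR M3 ((psi \o phi) x)),
     fib_obj e M1 -> fib_obj e M2 -> fib_obj e M3 ->
     is_morphism M1 M2 phi -> is_morphism M2 M3 psi ->
     restrict_map (psi \o phi) h12 = restrict_map psi h2 \o restrict_map phi h1).
Proof.
move=> _; split; [|split; [|split]].
- move=> M [[hM eM] _ _]; split; last exact: mu_R_gt0.
  by split=> //; split=> //; exact: restrictR_admissible.
- move=> M M' phi [[hM _] _ _] [[hM' _] _ _] hphi.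
  by exists (morphism_R hM hM' hphi); exact: restrict_map_morphism.
- by move=> M h _; exact: restrict_map_id.
- by move=> M1 M2 M3 phi psi h1 h2 h12 _ _ _ _ _; exact: restrict_map_comp.
Qed.
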